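(* Let $\mathcal{M}$ be a separable metric space, $f:\mathcal{M}\to\mathcal{M}$ continuous, $\mathcal{X}\subseteq\mathcal{M}$ forward invariant under $f$, $\mathcal{Z}$ a separable metric space, $g:\mathcal{Z}\to\mathcal{Z}$, and $F:\mathcal{X}\to\mathcal{Z}$ continuous with $F\circ f=g\circ F$ on $\mathcal{X}$. For any $\xi\in\mathcal{X}$, if the trajectory through $\xi$ is forward precompact in $\mathcal{X}$, then $F(\xi)\in D^+_{\mathcal{Z}}(F(\omega_{\mathcal{X}}(\xi)))$.
   Context: $\omega_{\mathcal{X}}(\xi)$ is the set of $x\in\mathcal{X}$ such that $f^{k_j}(\xi)\to x$ for some indices $k_j\to\infty$; $\omega_{\mathcal{Z}}(\zeta)$ is defined analogously for $g$ on $\mathcal{Z}$. $D^+_{\mathcal{Z}}(\Omega)=\{\zeta\in\mathcal{Z}\mid\omega_{\mathcal{Z}}(\zeta)=\Omega\}$. The trajectory through $\xi$ is forward precompact in $\mathcal{X}$ if the closure in $\mathcal{X}$ of $\{f^k(\xi)\mid k\in\mathbb{N}\}$ is compact. *)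

From HB Require Import structures.
From mathcomp Require Import all_boot all_order all_algebra.
From mathcomp Require Import all_classical all_reals all_analysis.
Set Implicit Arguments. Unset Strict Implicit. Unset Printing Implicit Defensive.
Import Order.TTheory GRing.Theory Num.Theory.
Local Open Scope classical_set_scope.

Definition separable (T : topologicalType) : Prop :=
  exists D : set T, countable D /\ closure D = setT.

Definition tends_to_infty (k : nat -> nat) : Prop :=
  forall N : nat, exists J : nat, forall j : nat, (J <= j)%N -> (N <= k j)%N.

(* omega-limit set of xi under f, relative to the subset X of the ambient
   space: points x of X with f^{k_j}(xi) -> x for some k_j -> oo.
   (Convergence in the subspace X to a point of X is convergence in the
   ambient space.) *)
Definition omega_limit (T : topologicalType) (X : set T) (f : T -> T) (xi : T)
  : set T :=
  [set x | X x /\ exists k : nat -> nat, tends_to_infty k /\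
       ((fun j => iter (k j) f xi) @ \oo --> x)].

Definition Dplus (T : topologicalType) (g : T -> T) (Om : set T) : set T :=
  [set z | omega_limit setT g z = Om].

Definition forward_orbit (T : Type) (f : T -> T) (xi : T) : set T :=
  [set iter k f xi | k in setT].

(* The trajectory through xi is forward precompact in X: its closure in X
   (= ambient closure intersected with X) is compact. *)
Definition forward_precompact_in (T : topologicalType) (X : set T)
  (f : T -> T) (xi : T) : Prop :=
  compact (closure (forward_orbit f xi) `&` X).

From HB Require Import structures.
From mathcomp Require Import all_boot all_order all_algebra.
From mathcomp Require Import all_classical all_reals all_analysis.
Import Order.TTheory GRing.Theory Num.Theory.
Local Open Scope classical_set_scope.

(* Along the orbit the semiconjugacy gives F (f^n xi) = g^n (F xi), so the
   continuity of F on X maps omega(xi) into omega(F xi).  Conversely, if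
   g^(k_j) (F xi) -> z, the points f^(k_j) xi lie in the compact closure of the
   orbit, hence cluster at some x in X; in a metric space x is the limit of a
   subsequence, so x is in omega(xi), and F x = z by uniqueness of limits in
   the Hausdorff space Z. *)

Lemma tends_to_inftyP (k : nat -> nat) : tends_to_infty k <-> k @ \oo --> \oo.
Proof.
rewrite cvgnyPge; split=> k_oo N.
- by have [J kJ] := k_oo N; exists J.
- by have [J _ kJ] := k_oo N; exists J.
Qed.

Lemma cluster_cvg_subseq {R : realType} {T : pseudoMetricType R}
    {u : nat -> T} {x : T} :
  cluster (u @ \oo) x ->
  exists2 s : nat -> nat, s @ \oo --> \oo & (u \o s) @ \oo --> x.
Proof.
move=> ux.
have near_x (Ni : nat * nat) :
    exists n, (Ni.1 <= n)%N /\ ball x (Ni.2.+1%:R^-1) (u n).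
  have [_ [[n Nn <-] uxn]] :
      u @` [set n | (Ni.1 <= n)%N] `&` ball x (Ni.2.+1%:R^-1) !=set0.
    apply: ux; first by exists Ni.1 => // n Nn; exists n.
    by apply: nbhsx_ballx; rewrite invr_gt0 ltr0n.
  by exists n.
have [next next_spec] := choice near_x.
pose fix s j := if j is i.+1 then next ((s i).+1, j) else next (0, 0)%N.
have s_gt j : (s j < s j.+1)%N by have [] := next_spec ((s j).+1, j.+1).
have s_ball j : ball x (j.+1%:R^-1) (u (s j)).
  case: j => [|j]; first by have [] := next_spec (0, 0)%N.
  by have [] := next_spec ((s j).+1, j.+1).
have s_ge j : (j <= s j)%N.
  by elim: j => // j IHj; exact: leq_ltn_trans IHj (s_gt j).
exists s.
  by apply/cvgnyPge => N; exists N => // j /= Nj; exact: leq_trans Nj (s_ge j).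
apply/cvg_ballP => e e_gt0; near=> j; apply: le_ball (s_ball j).
by apply: ltW; near: j; exact: near_infty_natSinv_lt (PosNum e_gt0).
Unshelve. all: end_near. Qed.

Lemma within_continuous_cvg_seq (T U : topologicalType) (X : set T)
    (F : T -> U) (w : nat -> T) (x : T) :
  {within X, continuous F} -> X x -> (forall j, X (w j)) ->
  w @ \oo --> x -> (F \o w) @ \oo --> F x.
Proof.
move=> F_cont Xx Xw wx.
apply: cvg_comp ((@subspace_continuousP T X U F).1 F_cont x Xx).
by move=> A /wx[N _ wA]; exists N => // j Nj; exact: wA j Nj (Xw j).
Qed.

Section semiconjugacy.
Context {M Z : topologicalType} {f : M -> M} {g : Z -> Z} {F : M -> Z}.
Context {X : set M}.
Hypothesis X_inv : f @` X `<=` X.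
Hypothesis F_conj : forall x, X x -> F (f x) = g (F x).

Lemma iter_invariant n x : X x -> X (iter n f x).
Proof.
by move=> Xx; elim: n => //= n IHn; apply: X_inv; exists (iter n f x).
Qed.

Lemma iter_semiconj n x : X x -> F (iter n f x) = iter n g (F x).
Proof.
move=> Xx; elim: n => //= n IHn.
by rewrite F_conj ?IHn //; exact: iter_invariant.
Qed.

Hypothesis F_cont : {within X, continuous F}.

Lemma image_omega_limit_sub xi : X xi ->
  F @` omega_limit X f xi `<=` omega_limit setT g (F xi).
Proof.
move=> Xxi _ [x [Xx [k [k_oo kx]]] <-]; split=> //; exists k; split=> //.
rewrite (_ : (fun j => _) = F \o (fun j => iter (k j) f xi)).
  by apply: within_continuous_cvg_seq kx => // j; exact: iter_invariant.
by apply: funext => j /=; rewrite iter_semiconj.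
Qed.

End semiconjugacy.

Section semiconjugacy_metric.
Context {R : realType} {M : pseudoMetricType R} {Z : topologicalType}.
Context {f : M -> M} {g : Z -> Z} {F : M -> Z} {X : set M}.
Hypothesis Z_hausdorff : hausdorff_space Z.
Hypothesis X_inv : f @` X `<=` X.
Hypothesis F_conj : forall x, X x -> F (f x) = g (F x).
Hypothesis F_cont : {within X, continuous F}.

Lemma omega_limit_sub_image xi : X xi -> forward_precompact_in X f xi ->
  omega_limit setT g (F xi) `<=` F @` omega_limit X f xi.
Proof.
move=> Xxi K_compact z [_ [k [k_oo gk_z]]].
pose v := (fun n => iter n f xi) \o k.
have Xv j : X (v j) by exact: iter_invariant.
have [x [[_ Xx] vx]] :
    closure (forward_orbit f xi) `&` X `&` cluster (v @ \oo) !=set0.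
  apply: K_compact; exists 0%N => // j _; split=> //.
  by apply: subset_closure; exists (k j).
have [s s_oo vs_x] := cluster_cvg_subseq vx.
have ks_oo : tends_to_infty (k \o s).
  by apply/tends_to_inftyP; apply: cvg_comp s_oo _; exact/tends_to_inftyP.
exists x; first by split=> //; exists (k \o s).
apply: (cvg_unique Z_hausdorff (F := (F \o (v \o s)) @ \oo)).
  exact: within_continuous_cvg_seq F_cont Xx (fun j => Xv (s j)) vs_x.
rewrite (_ : F \o (v \o s) = (fun j => iter (k j) g (F xi)) \o s).
  exact: cvg_comp s_oo gk_z.
by apply: funext => j /=; rewrite (iter_semiconj X_inv F_conj).
Qed.

End semiconjugacy_metric.

Theorem corollary26 (R : realType) (M Z : pseudoMetricType R)
  (hM : hausdorff_space M) (sM : separable M)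
  (hZ : hausdorff_space Z) (sZ : separable Z)
  (f : M -> M) (f_cont : continuous f)
  (X : set M) (X_inv : f @` X `<=` X)
  (g : Z -> Z) (F : M -> Z) (F_cont : {within X, continuous F})
  (F_conj : forall x, X x -> F (f x) = g (F x))
  (xi : M) (Xxi : X xi) :
  forward_precompact_in X f xi ->
  Dplus g (F @` omega_limit X f xi) (F xi).
Proof.
move=> K_compact; apply/seteqP; split.
- exact: omega_limit_sub_image.
- exact: image_omega_limit_sub.
Qed.
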